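(* Let $p\neq 2$ be a prime and $G=Z_{p^{\lambda_1}}\times\cdots\times Z_{p^{\lambda_n}}$ with $0<\lambda_1<\cdots<\lambda_n$. If $n\ge 2$ and $\lambda_n-\lambda_{n-1}\ge 2$, then $J(G)$ has precisely two maximal down-set chains, namely $D_1(G)=\{J(i,1):i\in\{1,\dots,n\}\}$ and $D_2(G)=\{J(n,j):j\in\{1,\dots,\lambda_n-\lambda_{n-1}\}\}$.
   Context: Tuples are ordered componentwise; for $\mathbf 0\le\mathbf a\le(\lambda_1,\dots,\lambda_n)$, $T(\mathbf a)$ is the set of $(g_1,\dots,g_n)\in G$ with $|g_i|=p^{a_i}$, and $R(\mathbf a)=\bigcup_{\mathbf b\le\mathbf a}T(\mathbf b)$. For $i\in\{1,\dots,n\}$ and $j\in\{1,\dots,\lambda_i\}$, $J(i,j)=R(\mathbf a)$ where $a_k=j$ for $k\ge i$ and $a_k=\max\{0,\,j-(\lambda_i-\lambda_k)\}$ for $k<i$. $J(G)$ is the set of all $J(i,j)$, partially ordered by inclusion. A down set of a poset $P$ is a subset $X$ such that $x\le y\in X$ implies $x\in X$; a down-set chain is a subset that is both a chain and a down set; it is maximal if it is not contained in a strictly larger down-set chain. *)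

From mathcomp Require Import all_boot all_order all_algebra all_fingroup.
Set Implicit Arguments. Unset Strict Implicit. Unset Printing Implicit Defensive.

(* Indices are 0-based: paper's index i in {1..n} is our i-1 in {0..n-1};
   lam : nat -> nat, with lam k the paper's lambda_{k+1}. *)

Section Defs.
Variables (p n : nat) (lam : nat -> nat).

Notation G := {dffun forall k : 'I_n, 'Z_(p ^ lam k)}.

Definition Tset (a : 'I_n -> nat) : {set G} :=
  [set g : G | [forall k, #[g k]%g == p ^ a k]].

(* R(a) = union of T(b) over b <= a (componentwise); the union over tuples b
   is written componentwise: each g k has order p^(b_k) for some b_k <= a k. *)
Definition Rset (a : 'I_n -> nat) : {set G} :=
  [set g : G | [forall k, [exists b : 'I_(a k).+1, #[g k]%g == p ^ b]]].

Definition Jset (i j : nat) : {set G} :=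
  Rset (fun k : 'I_n => if i <= k then j else j - (lam i - lam k)).

Definition JG : {set {set G}} :=
  [set A | [exists i : 'I_n, exists j : 'I_(lam i).+1, (0 < j) && (A == Jset i j)]].

Definition D1 : {set {set G}} := [set Jset i 1 | i : 'I_n].

Definition D2 : {set {set G}} :=
  [set Jset n.-1 j | j : 'I_(lam n.-1 - lam n.-2).+1 & 0 < j].

End Defs.

Definition down_set_chain (T : finType) (P X : {set {set T}}) : bool :=
  [&& X \subset P,
      [forall A in X, forall B in X, (A \subset B) || (B \subset A)] &
      [forall A in P, forall B in X, (A \subset B) ==> (A \in X)]].

Definition maximal_down_set_chain (T : finType) (P X : {set {set T}}) : Prop :=
  down_set_chain P X /\
  forall Y : {set {set T}}, down_set_chain P Y -> X \subset Y -> Y = X.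

From mathcomp Require Import all_boot all_order all_algebra all_fingroup.
From mathcomp Require Import cyclic zify.

(* R(a) is contained in R(b) iff min(a, lam) <= min(b, lam) componentwise, as one sees by
   testing with elements having a single nonzero component; so J(G) is a poset of
   explicit exponent vectors. Every J(i,j) with j >= 2 contains J(n,2), and every member
   of J(G) outside D_2 contains J(n-1,1). Since lam_n - lam_(n-1) >= 2, J(n,2) and
   J(n-1,1) are incomparable, so no down-set chain leaves both D_1 and D_2. As D_1 and
   D_2 are themselves down-set chains and neither contains the other, they are exactly
   the maximal ones. *)

Set Implicit Arguments.
Unset Strict Implicit.
Unset Printing Implicit Defensive.

Section ExponentOrder.
Variables (p n : nat) (lam : nat -> nat).
Hypothesis p_prime : prime p.
Hypothesis lam_gt0 : forall k : 'I_n, 0 < lam k.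

Notation G := {dffun forall k : 'I_n, 'Z_(p ^ lam k)}.

Let p_gt1 : 1 < p. Proof. exact: prime_gt1. Qed.

Lemma card_Zp_pow (k : 'I_n) : (Zp_trunc (p ^ lam k)).+2 = p ^ lam k.
Proof. by apply: Zp_cast; rewrite -(expn0 p) ltn_exp2l. Qed.

Lemma order_Zp_pow {k : 'I_n} (x : 'Z_(p ^ lam k)) :
  exists2 m, m <= lam k & #[x]%g = p ^ m.
Proof.
have : #[x]%g %| p ^ lam k.
  by have := order_dvdG (in_setT x); rewrite cardsT card_ord card_Zp_pow.
by case/(dvdn_pfactor _ _ p_prime) => m le_m ->; exists m.
Qed.

Lemma mem_Rset (a : 'I_n -> nat) (g : G) :
  (g \in Rset p lam a) = [forall k, #[g k]%g %| p ^ a k].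
Proof.
rewrite inE; apply: eq_forallb => k; apply/existsP/idP => [[b /eqP ->]|].
  by rewrite dvdn_Pexp2l // -ltnS.
by case/(dvdn_pfactor _ _ p_prime) => m le_m ->; exists (Ordinal (le_m : m < (a k).+1)).
Qed.

Definition spike (k0 : 'I_n) (c : nat) : G :=
  [ffun k => if k == k0 then (Zp1 ^+ (p ^ (lam k - c))%N)%g else 1%g].

Lemma order_spike (k0 k : 'I_n) c : c <= lam k0 ->
  #[spike k0 c k]%g = p ^ (if k == k0 then c else 0).
Proof.
move=> le_c; rewrite ffunE; case: eqP => [->|_]; last by rewrite order1.
by rewrite (@orderXexp _ p _ (lam k0)) ?order_Zp1 ?card_Zp_pow // subKn.
Qed.

Lemma Rset_subset (a b : 'I_n -> nat) :
  (Rset p lam a \subset Rset p lam b) =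
  [forall k, minn (a k) (lam k) <= minn (b k) (lam k)].
Proof.
apply/subsetP/forallP => [sub_ab k|le_ab g]; last first.
  rewrite !mem_Rset => /forallP g_a; apply/forallP => k.
  have := g_a k; have := le_ab k; case: (order_Zp_pow (g k)) => m le_m ->.
  by rewrite !dvdn_Pexp2l //; lia.
rewrite leqNgt; apply/negP => lt_ba.
set c := minn (a k) (lam k).
have le_c : c <= lam k by rewrite geq_minr.
have /sub_ab : spike k c \in Rset p lam a.
  rewrite mem_Rset; apply/forallP => k'; rewrite order_spike //.
  by case: eqP => [->|_]; rewrite ?dvdn_Pexp2l ?geq_minl.
rewrite mem_Rset => /forallP /(_ k); rewrite order_spike // eqxx dvdn_Pexp2l //.
by rewrite /c in lt_ba *; lia.
Qed.

End ExponentOrder.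

Section DownSetChains.
Variables (T : finType) (P : {set {set T}}).

Lemma down_set_chainP (X : {set {set T}}) :
  reflect [/\ X \subset P,
              {in X &, forall A B : {set T}, (A \subset B) || (B \subset A)} &
              {in P & X, forall A B : {set T}, A \subset B -> A \in X}]
          (down_set_chain P X).
Proof.
apply: (iffP and3P) => [[sXP /forall_inP chX /forall_inP dX]|[sXP chX dX]].
  split=> // [A B AX BX|A B AP BX].
    exact: (forall_inP (chX A AX)).
  exact/implyP/(forall_inP (dX A AP)).
split=> //; apply/forall_inP => A AX; apply/forall_inP => B BX.
  exact: chX.
exact/implyP/dX.
Qed.

Lemma maximal_down_set_chain_cover2 (D1 D2 : {set {set T}}) :
  down_set_chain P D1 -> down_set_chain P D2 ->
  ~~ (D1 \subset D2) -> ~~ (D2 \subset D1) ->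
  (forall X, down_set_chain P X -> X \subset D1 \/ X \subset D2) ->
  forall X, maximal_down_set_chain P X <-> X = D1 \/ X = D2.
Proof.
move=> dD1 dD2 nD12 nD21 cover X; split=> [[dX maxX]|].
  by case: (cover X dX) => sX; [left | right]; apply/esym/maxX.
have maximal (D D' : {set {set T}}) : down_set_chain P D -> ~~ (D \subset D') ->
    (forall Y, down_set_chain P Y -> Y \subset D \/ Y \subset D') ->
  maximal_down_set_chain P D.
  move=> dD nDD' coverD; split=> // Y dY sDY.
  case: (coverD Y dY) => sY; first by apply/eqP; rewrite eqEsubset sY.
  by case/negP: nDD'; apply: subset_trans sY.
case=> ->; [apply: (maximal _ D2) | apply: (maximal _ D1)] => // Y /cover[];
  by [left | right].
Qed.

End DownSetChains.

Section JPoset.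
Variables (p n : nat) (lam : nat -> nat).
Hypothesis p_prime : prime p.
Hypothesis lam0_gt0 : 0 < lam 0.
Hypothesis lam_incr : forall i, i.+1 < n -> lam i < lam i.+1.
Hypothesis n_gt1 : 1 < n.
Hypothesis gap_gt1 : 1 < lam n.-1 - lam n.-2.

Local Notation J := (Jset p n lam).
Local Notation d := (lam n.-1 - lam n.-2).

Let lt_last : n.-1 < n. Proof. by lia. Qed.
Let lt_penult : n.-2 < n. Proof. by lia. Qed.

Lemma lam_ltn {i k} : i < k -> k < n -> lam i < lam k.
Proof.
move=> lt_ik lt_kn; have lt_in := ltn_trans lt_ik lt_kn.
apply: (@homo_ltn_in _ [pred k | k < n] lam (fun a b => a < b)) => //.
- exact: ltn_trans.
- by move=> a b _ lt_bn c /andP[_ lt_cb]; exact: ltn_trans lt_cb lt_bn.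
- by move=> a _; apply: lam_incr.
Qed.

Lemma lam_leq {i k} : i <= k -> k < n -> lam i <= lam k.
Proof. by rewrite leq_eqVlt => /predU1P[->|/lam_ltn lt_lam /lt_lam /ltnW]. Qed.

Lemma lam_gt0 k : k < n -> 0 < lam k.
Proof. by move=> lt_kn; exact: leq_trans lam0_gt0 (lam_leq (leq0n k) lt_kn). Qed.

(* The exponent vector of [Jset i j], truncated at [lam] as in [Rset_subset]. *)
Definition Jexp (i j k : nat) : nat :=
  minn (if i <= k then j else j - (lam i - lam k)) (lam k).

Lemma JexpE i j k : i < n -> k < n -> j <= lam i ->
  Jexp i j k = if i <= k then j else j - (lam i - lam k).
Proof.
move=> lt_in lt_kn le_j; apply/minn_idPl; case: ifP => [le_ik|/negbT].
  exact: leq_trans le_j (lam_leq le_ik lt_kn).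
by rewrite -ltnNge => /lam_ltn /(_ lt_in); lia.
Qed.

Lemma Jexp_at_last i j : i < n -> j <= lam i -> Jexp i j n.-1 = j.
Proof. by move=> lt_in le_j; rewrite JexpE ?ifT //; lia. Qed.

Lemma Jexp1 i k : i < n -> k < n -> Jexp i 1 k = (i <= k).
Proof.
move=> lt_in lt_kn; rewrite JexpE ?lam_gt0 //; case: (leqP i k) => // /lam_ltn.
by move/(_ lt_in); lia.
Qed.

Lemma Jexp_top j k : k < n -> j <= d -> Jexp n.-1 j k = if n.-1 <= k then j else 0.
Proof.
move=> lt_kn le_j; rewrite JexpE //; last by lia.
case: (leqP n.-1 k) => // lt_k.
have : lam k <= lam n.-2 by apply: lam_leq; lia.
by lia.
Qed.

Lemma Jset_subsetP i j i' j' :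
  reflect (forall k, k < n -> Jexp i j k <= Jexp i' j' k)
          (J i j \subset J i' j').
Proof.
have lam_gt0' (k : 'I_n) : 0 < lam k by apply: lam_gt0 (ltn_ord k).
rewrite /Jset Rset_subset //; apply: (iffP forallP) => [le_J k lt_kn|le_J k].
  exact: (le_J (Ordinal lt_kn)).
exact: le_J.
Qed.

Lemma mem_JG A :
  reflect (exists i : 'I_n, exists2 j, 0 < j <= lam i & A = J i j) (A \in JG p n lam).
Proof.
rewrite inE; apply: (iffP existsP) => [[i /existsP[j /andP[j_gt0 /eqP->]]]|].
  by exists i, j => //; rewrite j_gt0 -ltnS ltn_ord.
case=> i [j /andP[j_gt0 le_j] ->]; exists i; apply/existsP.
by exists (Ordinal (le_j : j < (lam i).+1)); rewrite j_gt0 /=.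
Qed.

Lemma mem_D1 A : reflect (exists i : 'I_n, A = J i 1) (A \in D1 p n lam).
Proof. by apply: (iffP imsetP) => [[i _ ->]|[i ->]]; exists i. Qed.

Lemma mem_D2 A : reflect (exists2 j, 0 < j <= d & A = J n.-1 j) (A \in D2 p n lam).
Proof.
apply: (iffP imsetP) => [[j /[!inE] j_gt0 ->]|[j /andP[j_gt0 le_j] ->]].
  by exists j => //; rewrite j_gt0 -ltnS ltn_ord.
by exists (Ordinal (le_j : j < d.+1)); rewrite ?inE.
Qed.

Lemma Jset1_subset i i' : i' <= i -> i < n -> J i 1 \subset J i' 1.
Proof.
move=> le_i lt_in; apply/Jset_subsetP => k lt_kn.
rewrite !Jexp1 //; last by lia.
by case: (leqP i k) => // le_ik; rewrite (leq_trans le_i le_ik).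
Qed.

Lemma Jset_subset_Jset1 i j i' : i < n -> i' < n -> 0 < j <= lam i ->
  J i j \subset J i' 1 -> j = 1.
Proof.
move=> lt_in lt_i'n /andP[j_gt0 le_j] /Jset_subsetP /(_ _ lt_last).
by rewrite Jexp_at_last // Jexp1 //; lia.
Qed.

Lemma Jset_top_subset j j' : j <= j' -> j' <= d -> J n.-1 j \subset J n.-1 j'.
Proof.
move=> le_j le_j'; apply/Jset_subsetP => k lt_kn.
by rewrite !Jexp_top //; [case: ifP | lia].
Qed.

Lemma Jset_subset_Jset_top i j j' : i < n -> 0 < j <= lam i -> j' <= d ->
  J i j \subset J n.-1 j' -> i = n.-1 /\ j <= j'.
Proof.
move=> lt_in /andP[j_gt0 le_j] le_j' /Jset_subsetP /(_ _ lt_in).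
rewrite JexpE // leqnn Jexp_top //; case: (leqP n.-1 i) => [le_i le_jj'|]; last by lia.
by split; lia.
Qed.

Lemma Jset_top2_subset i j : i < n -> 2 <= j <= lam i -> J n.-1 2 \subset J i j.
Proof.
move=> lt_in /andP[j_gt1 le_j]; apply/Jset_subsetP => k lt_kn.
rewrite Jexp_top //; case: (leqP n.-1 k) => // le_k.
have -> : k = n.-1 by lia.
by rewrite Jexp_at_last.
Qed.

Lemma Jset_penult1_subset i j : i < n -> 0 < j <= lam i -> (i < n.-1) || (d < j) ->
  J n.-2 1 \subset J i j.
Proof.
move=> lt_in /andP[j_gt0 le_j] outside_D2; apply/Jset_subsetP => k lt_kn.
rewrite Jexp1 // JexpE //; case: (leqP n.-2 k) => // le_k.
case: (leqP i k) => // lt_k.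
have eq_i : i = n.-1 by lia.
have eq_k : k = n.-2 by lia.
by move: outside_D2; rewrite eq_i eq_k; lia.
Qed.

Lemma Jset_top2_penult1_incomparable :
  ~~ ((J n.-1 2 \subset J n.-2 1) || (J n.-2 1 \subset J n.-1 2)).
Proof.
rewrite negb_or; apply/andP; split; apply/Jset_subsetP.
  by move/(_ _ lt_last); rewrite Jexp_top // Jexp1 // leqnn; lia.
by move/(_ _ lt_penult); rewrite Jexp_top // Jexp1 // leqnn ifN /=; lia.
Qed.

Lemma down_set_chain_D1 : down_set_chain (JG p n lam) (D1 p n lam).
Proof.
apply/down_set_chainP; split.
- apply/subsetP => _ /mem_D1[i ->]; apply/mem_JG.
  by exists i, 1 => //; rewrite lam_gt0.
- move=> _ _ /mem_D1[i ->] /mem_D1[i' ->].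
  case: (leqP i i') => [le_i|/ltnW le_i'].
    by rewrite (Jset1_subset le_i) ?orbT.
  by rewrite (Jset1_subset le_i').
- move=> _ _ /mem_JG[i [j le_j ->]] /mem_D1[i' ->].
  by move/Jset_subset_Jset1 => -> //; apply/mem_D1; exists i.
Qed.

Lemma down_set_chain_D2 : down_set_chain (JG p n lam) (D2 p n lam).
Proof.
apply/down_set_chainP; split.
- apply/subsetP => _ /mem_D2[j /andP[j_gt0 le_j] ->]; apply/mem_JG.
  by exists (Ordinal lt_last), j => //; rewrite j_gt0 /=; lia.
- move=> _ _ /mem_D2[j /andP[_ le_j] ->] /mem_D2[j' /andP[_ le_j'] ->].
  case: (leqP j j') => [le_jj'|/ltnW le_j'j].
    by rewrite (Jset_top_subset le_jj').
  by rewrite (Jset_top_subset le_j'j) ?orbT.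
- move=> _ _ /mem_JG[i [j le_j ->]] /mem_D2[j' /andP[_ le_j'] ->].
  case/Jset_subset_Jset_top => // -> le_jj'; apply/mem_D2; exists j => //.
  by case/andP: le_j => -> _; apply: leq_trans le_j'.
Qed.

Lemma down_set_chain_subset_D1_or_D2 X : down_set_chain (JG p n lam) X ->
  X \subset D1 p n lam \/ X \subset D2 p n lam.
Proof.
case/down_set_chainP => sXJG chainX downX.
case: (boolP (X \subset D1 p n lam)) => [|/subsetPn[A AX A_notD1]]; [by left | right].
have top2X : J n.-1 2 \in X.
  have /mem_JG[i [j /andP[j_gt0 le_j] eqA]] := subsetP sXJG A AX.
  have j_gt1 : 1 < j.
    rewrite ltn_neqAle j_gt0 andbT eq_sym; apply: contraNneq A_notD1 => j1.
    by apply/mem_D1; exists i; rewrite eqA j1.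
  apply: (downX _ A) => //; last by rewrite eqA Jset_top2_subset ?j_gt1.
  by apply/mem_JG; exists (Ordinal lt_last), 2 => //=; lia.
apply/subsetP => B BX; apply/negPn/negP => B_notD2.
have /mem_JG[i [j /andP[j_gt0 le_j] eqB]] := subsetP sXJG B BX.
have outside_D2 : (i < n.-1) || (d < j).
  rewrite !ltnNge -negb_and; apply: contra B_notD2 => /andP[le_i le_j'].
  have eq_i : nat_of_ord i = n.-1 by have := ltn_ord i; lia.
  by apply/mem_D2; exists j; rewrite ?j_gt0 // eqB eq_i.
have penult1X : J n.-2 1 \in X.
  apply: (downX _ B) => //; last by rewrite eqB Jset_penult1_subset ?j_gt0.
  by apply/mem_JG; exists (Ordinal lt_penult), 1 => //=; rewrite lam_gt0.
by have := chainX _ _ top2X penult1X; rewrite (negbTE Jset_top2_penult1_incomparable).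
Qed.

Lemma D1_not_subset_D2 : ~~ (D1 p n lam \subset D2 p n lam).
Proof.
apply/subsetPn; exists (J 0 1); first by apply/mem_D1; exists (Ordinal (ltnW n_gt1)).
apply/mem_D2 => -[j /andP[_ le_j] eq_J].
have sub_J : J 0 1 \subset J n.-1 j by rewrite eq_J.
have [eq_0 _] := Jset_subset_Jset_top (ltnW n_gt1) (lam0_gt0 : 0 < 1 <= lam 0) le_j sub_J.
by move: eq_0; lia.
Qed.

Lemma D2_not_subset_D1 : ~~ (D2 p n lam \subset D1 p n lam).
Proof.
apply/subsetPn; exists (J n.-1 2); first by apply/mem_D2; exists 2.
apply/mem_D1 => -[i eq_J].
have /Jset_subset_Jset1 : J n.-1 2 \subset J i 1 by rewrite eq_J.
by move/(_ lt_last (ltn_ord i)); rewrite /=; lia.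
Qed.

End JPoset.

Theorem mainTheorem19 (p n : nat) (lam : nat -> nat) :
  prime p -> p != 2 ->
  0 < lam 0 ->
  (forall i, i.+1 < n -> lam i < lam i.+1) ->
  2 <= n ->
  2 <= lam n.-1 - lam n.-2 ->
  @D1 p n lam != @D2 p n lam /\
  (forall X : {set {set {dffun forall k : 'I_n, 'Z_(p ^ lam k)}}},
     maximal_down_set_chain (@JG p n lam) X <-> X = @D1 p n lam \/ X = @D2 p n lam).
Proof.
move=> p_prime _ lam0_gt0 lam_incr n_gt1 gap_gt1.
have nD12 : ~~ (D1 p n lam \subset D2 p n lam) by apply: D1_not_subset_D2.
split; first by apply: contraNneq nD12 => ->.
apply: maximal_down_set_chain_cover2 nD12 _ _.
- by apply: down_set_chain_D1.
- by apply: down_set_chain_D2.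
- by apply: D2_not_subset_D1.
- by move=> X; apply: down_set_chain_subset_D1_or_D2.
Qed.
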